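(* Let $D\geq 2$ be a square-free integer, $K=\mathbb{Q}(\sqrt{D})$ with ring of integers $\mathbb{Z}_K$, and let $p\geq 5$ be a prime not dividing $D$. Let $u_K>1$ be the fundamental unit of $K$ (with respect to the real embedding sending $\sqrt{D}$ to a positive number), and let $u_D$ be the first totally positive power of $u_K$ (so $u_D=u_K^2$ if $u_K$ has norm $-1$, and $u_D=u_K$ otherwise). For $\ell\geq 1$ put $d_\ell(D)=u_D^\ell+u_D^{-\ell}+1$ (a positive integer). Suppose there exists $\ell\geq 1$ with $p\mid d_\ell(D)$, and let $\ell$ be the least such index. If $p^2\mid d_\ell(D)$, then the order of $u_K$ in $(\mathbb{Z}_K/p\mathbb{Z}_K)^\times$ equals the order of $u_K$ in $(\mathbb{Z}_K/p^2\mathbb{Z}_K)^\times$. *)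

(* the real quadratic field K = Q(sqrt D) is realised inside
   algC (algebraic complex numbers), with sqrt D := sqrtC D > 0 (the real
   embedding sending sqrt D to a positive number). *)
From mathcomp Require Import all_boot all_order all_algebra all_field.
Set Implicit Arguments. Unset Strict Implicit. Unset Printing Implicit Defensive.
Import Order.TTheory GRing.Theory Num.Theory.
Local Open Scope ring_scope.

Definition squarefree (D : nat) : Prop :=
  forall q : nat, prime q -> ~~ (q * q %| D)%N.

Definition qsd (D : nat) (a b : rat) : algC := ratr a + ratr b * sqrtC (D%:R).

Definition inK (D : nat) (x : algC) : Prop := exists a b : rat, x = qsd D a b.

Definition inZK (D : nat) (x : algC) : Prop := inK D x /\ x \in Aint.

Definition unitZK (D : nat) (x : algC) : Prop :=
  inZK D x /\ x != 0 /\ inZK D x^-1.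

Definition fundamental_unit (D : nat) (u : algC) : Prop :=
  unitZK D u /\ 1 < u /\
  forall v, unitZK D v -> exists (s : bool) (n : int), v = (-1) ^+ s * u ^ n.

Definition congZK (D : nat) (m : nat) (x y : algC) : Prop :=
  inZK D ((x - y) / m%:R).

Definition order_mod (D : nat) (m : nat) (u : algC) (n : nat) : Prop :=
  (0 < n)%N /\ congZK D m (u ^+ n) 1 /\
  forall k : nat, (0 < k)%N -> congZK D m (u ^+ k) 1 -> (n <= k)%N.

(* m is the least exponent >= 1 such that u^m is totally positive, where u =
   a + b sqrt D and its Galois conjugate is a - b sqrt D *)
Definition first_totpos_exp (D : nat) (a b : rat) (m : nat) : Prop :=
  let tp k := 0 < qsd D a b ^+ k /\ 0 < qsd D a (- b) ^+ k in
  (0 < m)%N /\ tp m /\ forall k : nat, (0 < k)%N -> tp k -> (m <= k)%N.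

Definition dl (uD : algC) (l : nat) : algC := uD ^+ l + uD ^- l + 1.

(* A unit of Z_K has norm -1 or 1, so the totally positive power uD of u
   satisfies uD^-1 = uD', the Galois conjugate; hence d_k = uD^k + uD'^k + 1
   is rational and uD^k d_k = Phi3(uD^k), where Phi3 x = x^2 + x + 1.  From
   p^2 | d_l we get Phi3(u^(ml)) = 0, so u^(3ml) = 1 (mod p^2).  If n is the
   order of u mod p, the order mod p^2 divides n p (since x = 1 mod p implies
   x^p = 1 mod p^2) and 3ml, so it equals n unless p divides 3ml/n.  In that
   case p | l (as p >= 5 and m <= 2), y = u^(ml/p) satisfies y^3 = 1 (mod p),
   and Phi3(y^p) = 0 with 3 not dividing p forces Phi3(y) = 0 (mod p), that
   is p | d_(l/p), contradicting the minimality of l. *)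

From mathcomp Require Import all_boot all_order all_algebra all_field.
From mathcomp Require Import ring.
Import Order.TTheory GRing.Theory Num.Theory.
Set Implicit Arguments.
Unset Strict Implicit.
Unset Printing Implicit Defensive.
Local Open Scope ring_scope.

Section QuadraticField.

Variable D : nat.

Local Notation sqrtD := (sqrtC (D%:R : algC)).

Lemma sqrtD_sqr : sqrtD * sqrtD = D%:R.
Proof. by rewrite -expr2 sqrtCK. Qed.

Lemma qsdM a b c d :
  qsd D a b * qsd D c d = qsd D (a * c + b * d * D%:R) (a * d + b * c).
Proof.
rewrite /qsd !rmorphD !rmorphM /= rmorph_nat.
by move: sqrtD_sqr; set s := sqrtD => <-; ring.
Qed.

Lemma qsd_rat a : qsd D a 0 = ratr a.
Proof. by rewrite /qsd rmorph0 mul0r addr0. Qed.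

Lemma qsd0 : qsd D 0 0 = 0.
Proof. by rewrite qsd_rat rmorph0. Qed.

Lemma qsd1 : qsd D 1 0 = 1.
Proof. by rewrite qsd_rat rmorph1. Qed.

Lemma horner_qsd_conj (P : {poly rat}) a b : exists x y,
  (map_poly ratr P).[qsd D a b] = qsd D x y /\
  (map_poly ratr P).[qsd D a (- b)] = qsd D x (- y).
Proof.
elim/poly_ind: P => [|P c [x [y [Pu Pv]]]].
  by exists 0, 0; rewrite rmorph0 !horner0 oppr0 qsd0.
exists (x * a + y * b * D%:R + c), (x * b + y * a).
rewrite rmorphD rmorphM /= map_polyX map_polyC !hornerMXaddC Pu Pv !qsdM.
by split; rewrite /qsd !rmorphD /=; ring.
Qed.

Lemma qsdX a b k : exists x y,
  qsd D a b ^+ k = qsd D x y /\ qsd D a (- b) ^+ k = qsd D x (- y).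
Proof.
have [x [y]] := horner_qsd_conj 'X^k a b.
by rewrite map_polyXn !hornerXn; exists x, y.
Qed.

Hypotheses (D_ge2 : (2 <= D)%N) (D_sqfree : squarefree D).

Lemma sqrtD_irrational (r : rat) : ratr r != sqrtD.
Proof.
apply/eqP => r_sqrtD.
have sqrtD_Aint : sqrtD \in Aint.
  apply: (@root_monic_Aint ('X^2 - (D%:R)%:P)).
  - by rewrite /root !hornerE sqrtCK subrr.
  - exact: monicXnsubC.
  - by rewrite polyOverXnsubC rpred_nat.
have /natrP[k sqrtD_k] : sqrtD \in Num.nat.
  by rewrite natrEint Cint_rat_Aint ?sqrtC_ge0 ?ler0n // -r_sqrtD Crat_rat.
have kk_D : (k * k)%N = D by apply/eqP; rewrite -(eqr_nat algC) natrM -sqrtD_k sqrtD_sqr.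
have k_gt1 : (1 < k)%N.
  by move: D_ge2; rewrite -kk_D; case: k {sqrtD_k kk_D} => [|[|]].
by have := @D_sqfree _ (pdiv_prime k_gt1); rewrite -kk_D dvdn_mul ?pdiv_dvd.
Qed.

Lemma qsd_inj a b c d : qsd D a b = qsd D c d -> a = c /\ b = d.
Proof.
move=> e; have e' : ratr (a - c) = ratr (d - b) * sqrtD :> algC.
  rewrite !rmorphB /= -[ratr a](addrK (ratr b * sqrtD)).
  by move: e; rewrite /qsd => ->; ring.
have [bd|bd] := eqVneq b d.
  by move: e'; rewrite bd subrr rmorph0 mul0r => /eqP; rewrite fmorph_eq0 subr_eq0 => /eqP.
have := sqrtD_irrational ((a - c) / (d - b)).
by rewrite fmorph_div /= e' mulrAC divff ?mul1r ?eqxx // fmorph_eq0 subr_eq0 eq_sym.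
Qed.

Lemma qsd_eq0 a b : qsd D a b = 0 -> a = 0 /\ b = 0.
Proof. by rewrite -qsd0 => /qsd_inj. Qed.

Lemma root_qsd_conj (P : {poly rat}) a b :
  root (map_poly ratr P) (qsd D a b) -> root (map_poly ratr P) (qsd D a (- b)).
Proof.
rewrite /root; have [x [y [-> ->]]] := horner_qsd_conj P a b.
by move=> /eqP/qsd_eq0[-> ->]; rewrite oppr0 qsd0.
Qed.

Lemma Aint_qsd_conj a b : qsd D a b \in Aint -> qsd D a (- b) \in Aint.
Proof.
move=> Au; have [P [minP _] _] := minCpolyP (qsd D a b).
apply: (root_monic_Aint _ (minCpoly_monic _) Au).
by rewrite minP; apply: root_qsd_conj; rewrite -minP root_minCpoly.
Qed.

Lemma qsd_norm a b :
  qsd D a b * qsd D a (- b) = ratr (a ^+ 2 - b ^+ 2 * D%:R).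
Proof.
rewrite qsdM (_ : a * - b + b * a = 0) ?qsd_rat; last by ring.
by congr ratr; ring.
Qed.

Lemma int_mul_eq1_sqr (R : archiNumDomainType) (x y : R) :
  x \is a Num.int -> y \is a Num.int -> x * y = 1 -> x ^+ 2 = 1.
Proof.
move=> Zx Zy xy1.
have /andP[x0 y0] : (x != 0) && (y != 0).
  by rewrite -negb_or -mulf_eq0 xy1 oner_eq0.
have x1 : `|x| = 1.
  apply/le_anti; rewrite norm_intr_ge1 // andbT.
  by rewrite -normr1 -xy1 normrM ler_peMr ?normr_ge0 ?norm_intr_ge1.
by rewrite -real_normK ?Rreal_int // x1 expr1n.
Qed.

Lemma unitZK_norm_sqr a b :
  unitZK D (qsd D a b) -> (qsd D a b * qsd D a (- b)) ^+ 2 = 1.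
Proof.
move=> [[_ Au] [u0 [[c [d uV]] AuV]]].
have uv1 : qsd D a b * qsd D c d = 1 by rewrite -uV mulfV.
have conj_uv1 : qsd D a (- b) * qsd D c (- d) = 1.
  move: uv1; rewrite !qsdM -qsd1 => /qsd_inj[uv1 uv0]; congr qsd.
    by rewrite -[RHS]uv1; ring.
  by rewrite -[RHS]oppr0 -uv0; ring.
have ZN x y : qsd D x y \in Aint -> qsd D x y * qsd D x (- y) \in Num.int.
  move=> Axy; apply: Cint_rat_Aint; first by rewrite qsd_norm Crat_rat.
  by rewrite rpredM ?Aint_qsd_conj.
have AuV' : qsd D c d \in Aint by rewrite -uV.
apply: (int_mul_eq1_sqr (ZN _ _ Au) (ZN _ _ AuV')).
by rewrite mulrACA uv1 conj_uv1 mulr1.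
Qed.

Lemma first_totpos_exp_inv a b m :
  unitZK D (qsd D a b) -> first_totpos_exp D a b m ->
  (qsd D a b ^+ m)^-1 = qsd D a (- b) ^+ m.
Proof.
move=> u_unit [m_gt0 [[um_gt0 vm_gt0] _]]; apply: mulr1_eq; rewrite -exprMn.
have Nm_gt0 : 0 <= (qsd D a b * qsd D a (- b)) ^+ m.
  by rewrite exprMn ltW ?mulr_gt0.
apply/eqP; rewrite -(@pexpr_eq1 _ _ 2 _ Nm_gt0) // -exprM mulnC exprM.
by rewrite unitZK_norm_sqr // expr1n.
Qed.

Lemma first_totpos_exp_le2 a b m :
  0 < qsd D a b -> first_totpos_exp D a b m -> (m <= 2)%N.
Proof.
move=> u_gt0 [_ [_ m_min]]; apply: m_min => //; split; first by rewrite exprn_gt0.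
have v_neq0 : qsd D a (- b) != 0.
  apply: contraTneq u_gt0 => /qsd_eq0[a0 /eqP]; rewrite oppr_eq0 => /eqP b0.
  by rewrite a0 b0 qsd0 ltxx.
have real_ratr (r : rat) : (ratr r : algC) \is Num.real by apply/Creal_Crat/Crat_rat.
rewrite real_exprn_even_gt0 ?v_neq0 ?orbT // realD ?real_ratr // realM ?real_ratr //.
by rewrite ger0_real ?sqrtC_ge0 ?ler0n.
Qed.

Lemma Crat_dl a b m k :
  unitZK D (qsd D a b) -> first_totpos_exp D a b m ->
  dl (qsd D a b ^+ m) k \in Crat.
Proof.
move=> u_unit m_tp; rewrite /dl -exprVn first_totpos_exp_inv // -!exprM.
have [x [y [-> ->]]] := qsdX a b (m * k).
suff -> : qsd D x y + qsd D x (- y) + 1 = ratr (x + x + 1) by apply: Crat_rat.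
by rewrite /qsd !rmorphD !rmorphN rmorph1 /=; ring.
Qed.

End QuadraticField.

Section Congruences.

Variable e : algC.

Lemma eqAmodX x y k : x \in Aint -> y \in Aint ->
  (x == y %[mod e])%A -> (x ^+ k == y ^+ k %[mod e])%A.
Proof.
move=> Ax Ay xy; elim: k => [|k IHk]; rewrite ?expr0 // !exprS.
by apply: eqAmodM; rewrite ?rpredX.
Qed.

Lemma eqAmod_expr_modn y n k : y \in Aint ->
  (y ^+ n == 1 %[mod e])%A -> (y ^+ k == y ^+ (k %% n) %[mod e])%A.
Proof.
move=> Ay yn1; rewrite {1}(divn_eq k n) exprD mulnC exprM.
rewrite -[X in (_ == X %[mod _])%A]mul1r; apply: eqAmodMr; first exact: rpredX.
by rewrite -(expr1n _ (k %/ n)); apply: eqAmodX; rewrite ?rpredX ?rpred1.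
Qed.

Lemma eqAmodWl d x y : d \in Aint ->
  (x == y %[mod d * e])%A -> (x == y %[mod e])%A.
Proof.
move=> Ad; rewrite /eqAmod; have [-> _|xy0] := eqVneq (x - y) 0; first exact: rpred0.
rewrite ![(_ %| _)%A]unfold_in mulf_eq0 (negbTE xy0).
have [|e0] := eqVneq e 0; rewrite ?orbT //; have [//|d0 /= xy] := eqVneq d 0.
have -> : (x - y) / e = d * ((x - y) / (d * e)) by rewrite invfM mulrCA mulVKf.
exact: rpredM.
Qed.

End Congruences.

Lemma eqAmod1_lift (p : nat) x : x \in Aint ->
  (x == 1 %[mod p%:R])%A -> (x ^+ p == 1 %[mod p%:R * p%:R])%A.
Proof.
move=> Ax x1; have [->|p0] := posnP p; first by rewrite expr0.
have sum_p0 : (\sum_(i < p) x ^+ i == 0 %[mod p%:R])%A.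
  apply: (@eqAmod_trans _ (\sum_(i < p) 1)); last by rewrite sumr_const card_ord.
  elim/big_ind2: _ => // [? ? ? ? /eqAmodD|i _]; first exact.
  by rewrite -[X in (_ == X %[mod _])%A](expr1n _ i) eqAmodX ?rpred1.
move: x1 sum_p0; rewrite /eqAmod subr0 subrX1 ![(_ %| _)%A]unfold_in.
have pR0 : p%:R != 0 :> algC by rewrite pnatr_eq0 -lt0n.
rewrite mulf_eq0 orbb (negbTE pR0) invfM mulrACA.
exact: rpredM.
Qed.

Definition Phi3 (x : algC) : algC := x ^+ 2 + x + 1.

Lemma eqAmod_Phi3 e x y : x \in Aint -> y \in Aint ->
  (x == y %[mod e])%A -> (Phi3 x == Phi3 y %[mod e])%A.
Proof. by move=> Ax Ay xy; rewrite !eqAmodD ?eqAmodX. Qed.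

Lemma eqAmod_Phi3_cube e x : x \in Aint ->
  (Phi3 x == 0 %[mod e])%A -> (x ^+ 3 == 1 %[mod e])%A.
Proof.
move=> Ax x0; rewrite /eqAmod (_ : _ - 1 = (x - 1) * Phi3 x); last by rewrite /Phi3; ring.
by rewrite -eqAmod0 -(mulr0 (x - 1)) eqAmodMl ?rpredB ?rpred1.
Qed.

(* As [y ^+ 3 = 1], [Phi3 (y ^+ k)] is [Phi3 y] or [Phi3 (y ^+ 2) = y ^+ 4 + y ^+ 2 + 1 = Phi3 y]. *)
Lemma eqAmod_Phi3_expr e y k : y \in Aint -> ~~ (3 %| k)%N ->
  (y ^+ 3 == 1 %[mod e])%A -> (Phi3 (y ^+ k) == 0 %[mod e])%A ->
  (Phi3 y == 0 %[mod e])%A.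
Proof.
move=> Ay k3 y3; have ymod3 j := eqAmod_expr_modn j Ay y3.
rewrite (eqAmod_transl _ (eqAmod_Phi3 (rpredX _ Ay) (rpredX _ Ay) (ymod3 k))).
have := ltn_mod k 3; move: k3; rewrite /dvdn; case: (k %% 3)%N => [|[|[|]]] //= _ _.
move=> /(eqAmod_trans _); apply; rewrite /Phi3 -exprM (addrC (y ^+ 2)).
apply: eqAmodD => //; apply: eqAmodD => //.
by rewrite eqAmod_sym; apply: ymod3 4%N.
Qed.

Definition order_Amod (e u : algC) (n : nat) : Prop :=
  (0 < n)%N /\ (u ^+ n == 1 %[mod e])%A /\
  forall k : nat, (0 < k)%N -> (u ^+ k == 1 %[mod e])%A -> (n <= k)%N.

Section Order.

Variable u : algC.
Hypothesis Au : u \in Aint.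

Lemma order_Amod_exists e k : (0 < k)%N -> (u ^+ k == 1 %[mod e])%A ->
  exists n, order_Amod e u n.
Proof.
move=> k0 uk1; have ex_k : exists k, (0 < k)%N && (u ^+ k == 1 %[mod e])%A.
  by exists k; rewrite k0.
case: (ex_minnP ex_k) => n /andP[n0 un1] n_min; exists n; do 2!split=> //.
by move=> j j0 uj1; apply: n_min; rewrite j0.
Qed.

Lemma order_Amod_dvd e n k : order_Amod e u n ->
  (u ^+ k == 1 %[mod e])%A = (n %| k)%N.
Proof.
move=> [n0 [un1 n_min]]; apply/idP/idP => [uk1|/dvdnP[q ->]].
  have ukn1 : (u ^+ (k %% n) == 1 %[mod e])%A.
    by rewrite -(eqAmod_transl _ (eqAmod_expr_modn k Au un1)).
  apply: contraT; rewrite /dvdn -lt0n => kn0.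
  by have := n_min _ kn0 ukn1; rewrite leqNgt ltn_mod n0.
rewrite mulnC exprM -(expr1n _ q); apply: eqAmodX; by rewrite ?rpredX ?rpred1.
Qed.

(* The order mod [p^2] divides both [n * p] and [N], whose gcd is [n]. *)
Lemma order_Amod_sqr (p n N : nat) : (0 < p)%N -> order_Amod p%:R u n ->
  (u ^+ N == 1 %[mod p%:R * p%:R])%A -> coprime p (N %/ n) ->
  order_Amod (p%:R * p%:R) u n.
Proof.
move=> p0 ordn uN1 p_coprime; have [n0 [un1 n_min]] := ordn.
have modp k : (u ^+ k == 1 %[mod p%:R * p%:R])%A -> (u ^+ k == 1 %[mod p%:R])%A.
  exact/eqAmodWl/rpred_nat.
have unp1 : (u ^+ (n * p) == 1 %[mod p%:R * p%:R])%A.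
  by rewrite exprM eqAmod1_lift ?rpredX.
have np0 : (0 < n * p)%N by rewrite muln_gt0 n0.
have [n2 ordn2] := order_Amod_exists np0 unp1.
have n2_n : (n2 %| n)%N.
  have n_N : (n %| N)%N by rewrite -(order_Amod_dvd _ ordn) modp.
  have n2_np : (n2 %| n * p)%N by rewrite -(order_Amod_dvd _ ordn2).
  have n2_N : (n2 %| N)%N by rewrite -(order_Amod_dvd _ ordn2).
  have : (n2 %| gcdn (n * p) N)%N by rewrite dvdn_gcd n2_np n2_N.
  by rewrite -(divnK n_N) [(_ * n)%N]mulnC -muln_gcdr (eqP p_coprime) muln1.
split=> //; split; first by rewrite (order_Amod_dvd _ ordn2).
by move=> k k0 /modp; apply: n_min.
Qed.

End Order.

Lemma congZK_qsdX1E D q a b k : (0 < q)%N ->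
  congZK D q (qsd D a b ^+ k) 1 <-> (qsd D a b ^+ k == 1 %[mod q%:R])%A.
Proof.
move=> q0; have qR0 : q%:R != 0 :> algC by rewrite pnatr_eq0 -lt0n.
rewrite /eqAmod [(_ %| _)%A]unfold_in (negbTE qR0); split=> [[]//|uk1]; split=> //.
have [x [y [-> _]]] := qsdX D a b k; exists ((x - 1) / q%:R), (y / q%:R).
by rewrite /qsd !fmorph_div /= rmorphB /= !rmorph_nat rmorph1; ring.
Qed.

Lemma order_modE D q a b n : (0 < q)%N ->
  order_mod D q (qsd D a b) n <-> order_Amod q%:R (qsd D a b) n.
Proof.
move=> q0; have E k := @congZK_qsdX1E D q a b k q0.
split=> [] [n0 [un1 n_min]]; do 2!split=> //; try exact/E.
all: by move=> k k0 /E; apply: n_min.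
Qed.

Lemma eqAmod0_Phi3_dl e x k : x \in Aint -> x^-1 \in Aint -> x != 0 ->
  (Phi3 (x ^+ k) == 0 %[mod e])%A = (dl x k == 0 %[mod e])%A.
Proof.
move=> Ax AxV x0; have xk0 : x ^+ k != 0 by rewrite expf_neq0.
have -> : Phi3 (x ^+ k) = x ^+ k * dl x k.
  by rewrite /Phi3 /dl !mulrDr mulfV //; ring.
apply/idP/idP => [/(eqAmodMl (rpredX k AxV))|/(eqAmodMl (rpredX k Ax))].
  by rewrite exprVn mulKf // mulr0.
by rewrite mulr0.
Qed.

Lemma coprime_order_cofactor (p m l n : nat) (U : algC) :
  prime p -> (5 <= p)%N -> (0 < m)%N -> (m <= 2)%N -> (0 < l)%N ->
  U \in Aint -> order_Amod p%:R U n ->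
  (Phi3 (U ^+ (m * l)) == 0 %[mod p%:R])%A ->
  (forall k, (0 < k)%N -> (k < l)%N -> ~~ (Phi3 (U ^+ (m * k)) == 0 %[mod p%:R])%A) ->
  coprime p (m * l * 3 %/ n).
Proof.
move=> p_pr p5 m0 m2 l0 AU ordn Phi3_l l_min.
have n_N : (n %| m * l * 3)%N.
  by rewrite -(order_Amod_dvd AU _ ordn) exprM eqAmod_Phi3_cube ?rpredX.
rewrite prime_coprime //; apply/negP => p_cofactor.
have [l1 l_eq] : exists l1, l = (l1 * p)%N.
  apply/dvdnP; have := dvdn_trans p_cofactor (dvdn_div n_N).
  rewrite !Euclid_dvdM // => /orP[/orP[p_m|//]|p_3].
    by have := leq_trans p5 (leq_trans (dvdn_leq m0 p_m) m2).
  by have := leq_trans p5 (dvdn_leq (isT : (0 < 3)%N) p_3).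
have l1_gt0 : (0 < l1)%N by move: l0; rewrite l_eq muln_gt0 => /andP[].
have l1_lt_l : (l1 < l)%N by rewrite l_eq ltn_Pmulr ?prime_gt1.
apply: (negP (l_min l1 l1_gt0 l1_lt_l)).
apply: (@eqAmod_Phi3_expr _ _ p); first exact: rpredX.
- by rewrite dvdn_prime2 //; apply: contraTneq p5 => <-.
- rewrite -exprM (order_Amod_dvd AU _ ordn) -(@dvdn_pmul2r p) ?prime_gt0 //.
  by rewrite mulnC -dvdn_divRL // mulnAC -[(m * l1 * p)%N]mulnA -l_eq.
- by rewrite -exprM -[(m * l1 * p)%N]mulnA -l_eq.
Qed.

Theorem proposition3p1 (D p : nat) (a b : rat) (m l : nat) :
  (2 <= D)%N -> squarefree D ->
  prime p -> (5 <= p)%N -> ~~ (p %| D)%N ->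
  fundamental_unit D (qsd D a b) ->
  first_totpos_exp D a b m ->
  let uD := qsd D a b ^+ m in
  (0 < l)%N -> (p%:R %| dl uD l)%C ->
  (forall k : nat, (0 < k)%N -> (k < l)%N -> ~ (p%:R %| dl uD k)%C) ->
  ((p ^ 2)%N%:R %| dl uD l)%C ->
  exists n : nat, order_mod D p (qsd D a b) n /\ order_mod D (p ^ 2) (qsd D a b) n.
Proof.
move=> D_ge2 D_sqfree p_pr p5 _ [u_unit [u_gt1 _]] m_tp uD l_gt0 _ l_min p2_dl.
have [[_ Au] [u0 [_ AuV]]] := u_unit.
have [m_gt0 _] := m_tp.
have m_le2 := first_totpos_exp_le2 D_ge2 D_sqfree (lt_trans ltr01 u_gt1) m_tp.
have dvd_Phi3 (q k : nat) :
    (q%:R %| dl uD k)%C = (Phi3 (qsd D a b ^+ (m * k)) == 0 %[mod q%:R])%A.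
  have AuDV : uD^-1 \in Aint by rewrite -exprVn rpredX.
  rewrite exprM eqAmod0_Phi3_dl ?rpredX ?expf_neq0 //.
  by rewrite eqAmod0_rat ?rpred_nat ?Crat_dl.
have Phi3_p2 : (Phi3 (qsd D a b ^+ (m * l)) == 0 %[mod p%:R * p%:R])%A.
  by rewrite -natrM -dvd_Phi3 mulnn.
have uN1 : (qsd D a b ^+ (m * l * 3) == 1 %[mod p%:R * p%:R])%A.
  by rewrite exprM eqAmod_Phi3_cube ?rpredX.
have modp x y : (x == y %[mod p%:R * p%:R])%A -> (x == y %[mod p%:R])%A.
  exact/eqAmodWl/rpred_nat.
have N_gt0 : (0 < m * l * 3)%N by rewrite !muln_gt0 l_gt0 m_gt0.
have [n ordn] := order_Amod_exists N_gt0 (modp _ _ uN1).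
have p_coprime : coprime p (m * l * 3 %/ n).
  apply: coprime_order_cofactor p_pr p5 m_gt0 m_le2 l_gt0 Au ordn (modp _ _ Phi3_p2) _.
  by move=> k k_gt0 k_lt_l; rewrite -dvd_Phi3; apply/negP/l_min.
exists n; rewrite !order_modE ?expn_gt0 ?prime_gt0 // -mulnn natrM; split=> //.
exact (order_Amod_sqr Au (prime_gt0 p_pr) ordn uN1 p_coprime).
Qed.
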